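(* Every dappled patch $G$ has a homomorphism (of dappled graphs) to the dappled triangular grid $\mathbf{T}$.
   Context: A patch is a connected plane graph all of whose faces, except possibly the outer face, have length three. A hued graph is a graph $G$ with a proper coloring $\psi_G:V(G)\to\mathbb{Z}_3$ (hue); a dappled graph is a hued graph $G$ with additionally a proper coloring $\varphi_G:V(G)\to\mathbb{Z}_2^2$ (color). A dappled patch is a patch that is a dappled graph. A homomorphism of dappled graphs $f:V(G)\to V(H)$ maps adjacent vertices to adjacent vertices and preserves both hue and color. The dappled triangular grid $\mathbf{T}$ has vertex set $\mathbb{Z}^2$, with $(i_1,j_1)$ and $(i_2,j_2)$ adjacent iff $(i_2-i_1,j_2-j_1)\in\{\pm(1,0),\pm(0,1),\pm(1,1)\}$, hue $(i+j)\bmod 3$ and color $(i\bmod 2,j\bmod 2)$ at vertex $(i,j)$. *)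

From mathcomp Require Import all_boot all_order all_algebra.
Set Implicit Arguments. Unset Strict Implicit. Unset Printing Implicit Defensive.
Import GRing.Theory Num.Theory.
Local Open Scope ring_scope.

(* A plane graph is presented combinatorially as a planar (genus 0) rotation
   system / combinatorial map: vertices V, darts D (two per edge), [tail d]
   the vertex a dart leaves from, [rev] the fixed-point-free involution
   pairing the two darts of an edge, [rot] the cyclic order of darts around
   each vertex.  Faces are the orbits of [face_next := rot \o rev]; the length
   of a face is the length of its boundary walk (the orbit size). *)
Section PlaneGraph.
Variables (V D : finType) (tail : D -> V) (rev rot : D -> D).

Definition adj : rel V :=
  fun u v => [exists d, (tail d == u) && (tail (rev d) == v)].

Definition face_next (d : D) : D := rot (rev d).

Definition is_rotation_system : Prop :=
  [/\ (forall d, rev (rev d) = d), (forall d, rev d != d),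
      injective rot, (forall d, tail (rot d) = tail d)
    & (forall d e, tail d = tail e -> fconnect rot d e)].

Definition is_simple : Prop :=
  (forall d, tail (rev d) != tail d) /\
  (forall d e, tail d = tail e -> tail (rev d) = tail (rev e) -> d = e).

Definition is_connected : Prop := forall u v, connect adj u v.

Definition nfaces : nat := fcard face_next (@predT D).

(* Euler's formula characterises genus 0 for connected maps. *)
Definition is_spherical : Prop :=
  (0 < #|D|)%N -> (#|V| + nfaces = (#|D| %/ 2) + 2)%N.

Definition is_plane_graph : Prop :=
  [/\ is_rotation_system, is_simple & is_spherical].

(* A patch: connected plane graph all of whose faces, except possibly one
   (the outer face), have length three. *)
Definition is_patch : Prop :=
  [/\ is_plane_graph, is_connected &
      forall d1 d2, order face_next d1 != 3%N -> order face_next d2 != 3%N ->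
        fconnect face_next d1 d2].

Definition proper_coloring (C : Type) (c : V -> C) : Prop :=
  forall u v, adj u v -> c u <> c v.
End PlaneGraph.

Definition adjT (p q : int * int) : Prop :=
  let di := q.1 - p.1 in let dj := q.2 - p.2 in
  (di, dj) \in [:: (1, 0); (-1, 0); (0, 1); (0, -1); (1, 1); (-1, -1)].

Definition hueT (p : int * int) : 'Z_3 := (p.1 + p.2)%:~R.
Definition colorT (p : int * int) : 'Z_2 * 'Z_2 := (p.1%:~R, p.2%:~R).

(* Each dart of the patch is sent to the unique unit step of the grid with the
   same hue and color differences.  These steps sum to zero around every
   triangle, hence, by antisymmetry, around the outer face too.  On a planar
   map such a skew-symmetric labelling is a coboundary: the skew labellings
   with zero face sums have dimension at most #edges - #faces + 1, which by
   Euler's formula is #vertices - 1, the rank of the coboundary map of a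
   connected graph.  Integrating the steps from a vertex placed at a grid
   point of its own hue and color gives the homomorphism, and connectedness
   propagates the hue and color equalities. *)

From mathcomp Require Import all_boot all_order all_algebra.
From HB Require Import structures.
From mathcomp Require Import zify ring.
Set Implicit Arguments. Unset Strict Implicit. Unset Printing Implicit Defensive.
Import GRing.Theory Num.Theory.
Local Open Scope ring_scope.

(* The edge vectors (1,0), (0,1), (1,1) of T change the color by (1,0),
   (0,1), (1,1) and the hue by 1, 1, 2 = -1. *)
Definition grid_step (dh : 'Z_3) (dc : 'Z_2 * 'Z_2) : int * int :=
  let s : int := if dh == 1 then 1 else -1 in
  if dc == (1, 0) then (s, 0) else if dc == (0, 1) then (0, s) else (- s, - s).

Lemma Z3P (x : 'Z_3) : [\/ x = 0, x = 1 | x = 2].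
Proof.
by case: x => -[|[|[|//]]] ?; [constructor 1|constructor 2|constructor 3]; apply: val_inj.
Qed.

Lemma Z2P (x : 'Z_2) : x = 0 \/ x = 1.
Proof. by case: x => -[|[|//]] ?; [left|right]; apply: val_inj. Qed.

Lemma Z2x2P (c : 'Z_2 * 'Z_2) : [\/ c = (0, 0), c = (1, 0), c = (0, 1) | c = (1, 1)].
Proof.
by case: c => a b; case: (Z2P a) => ->; case: (Z2P b) => ->;
  [constructor 1|constructor 3|constructor 2|constructor 4].
Qed.

Lemma hueTB p q : hueT (p - q) = hueT p - hueT q.
Proof. by rewrite /hueT -intrB opprD addrACA. Qed.

Lemma colorTB p q : colorT (p - q) = colorT p - colorT q.
Proof. by rewrite /colorT !intrB. Qed.

Lemma exists_grid_point h c : exists p, hueT p = h /\ colorT p = c.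
Proof.
(* 3 c.1 + 4 (h - c.2) is c.1 modulo 2 and h - c.2 modulo 3 *)
exists (3 * (c.1 : nat)%:Z + 4 * ((h : nat)%:Z - (c.2 : nat)%:Z), (c.2 : nat)%:Z).
by split; apply/eqP; case: (Z3P h) => ->; case: (Z2x2P c) => ->; vm_compute.
Qed.

Section GridStep.
Variables (dh : 'Z_3) (dc : 'Z_2 * 'Z_2).
Hypotheses (dh_neq0 : dh != 0) (dc_neq0 : dc != 0).

Lemma hueT_grid_step : hueT (grid_step dh dc) = dh.
Proof.
apply/eqP; move: dh_neq0 dc_neq0.
by case: (Z3P dh) => ->; case: (Z2x2P dc) => ->; vm_compute.
Qed.

Lemma colorT_grid_step : colorT (grid_step dh dc) = dc.
Proof.
apply/eqP; move: dh_neq0 dc_neq0.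
by case: (Z3P dh) => ->; case: (Z2x2P dc) => ->; vm_compute.
Qed.

Lemma grid_stepN : grid_step (- dh) (- dc) = - grid_step dh dc.
Proof.
apply/eqP; move: dh_neq0 dc_neq0.
by case: (Z3P dh) => ->; case: (Z2x2P dc) => ->; vm_compute.
Qed.

Lemma adjT_grid_step p : adjT p (p + grid_step dh dc).
Proof.
rewrite /adjT /= !(addrC p.1) !(addrC p.2) !addrK; move: dh_neq0 dc_neq0.
by case: (Z3P dh) => ->; case: (Z2x2P dc) => ->; vm_compute.
Qed.
End GridStep.

Lemma grid_stepD dh1 dh2 dc1 dc2 :
  dh1 != 0 -> dh2 != 0 -> dh1 + dh2 != 0 ->
  dc1 != 0 -> dc2 != 0 -> dc1 + dc2 != 0 ->
  grid_step dh1 dc1 + grid_step dh2 dc2 = grid_step (dh1 + dh2) (dc1 + dc2).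
Proof.
move=> h1 h2 h12 c1 c2 c12; apply/eqP; move: h1 h2 h12 c1 c2 c12.
by case: (Z3P dh1) => ->; case: (Z3P dh2) => ->;
  case: (Z2x2P dc1) => ->; case: (Z2x2P dc2) => ->; vm_compute.
Qed.

Lemma grid_step_triangle h0 h1 h2 c0 c1 c2 :
  h0 != h1 -> h1 != h2 -> h2 != h0 -> c0 != c1 -> c1 != c2 -> c2 != c0 ->
  grid_step (h1 - h0) (c1 - c0) + grid_step (h2 - h1) (c2 - c1)
    + grid_step (h0 - h2) (c0 - c2) = 0.
Proof.
move=> h01 h12 h20 c01 c12 c20.
have chain (R : zmodType) (x y z : R) : (y - x) + (z - y) = z - x.
  by rewrite addrC addrA subrK.
rewrite grid_stepD ?chain ?subr_eq0 // 1?eq_sym //.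
by rewrite -[h0 - h2]opprB -[c0 - c2]opprB grid_stepN ?addrN // subr_eq0.
Qed.

Lemma dim_ffun (F : fieldType) (T : finType) :
  \dim (fullv : {vspace {ffun T -> F^o}}) = #|T|.
Proof. by rewrite dimvf /dim /= muln1. Qed.

Lemma triangle_face_sum (R : nmodType) (T : finType) (f : T -> T) (g : T -> R) x :
  order f x = 3 -> \sum_(y | fconnect f x y) g y = g x + g (f x) + g (f (f x)).
Proof.
move=> x3; rewrite (eq_bigl (mem (orbit f x))) => [|y]; last by rewrite fconnect_orbit.
by rewrite -big_uniq ?orbit_uniq // /orbit x3 !big_cons big_nil /= addr0 addrA.
Qed.

Lemma sum_skew_eq0 (R : numDomainType) (T : finType) (r : T -> T) (g : T -> R) :
  injective r -> (forall x, g (r x) = - g x) -> \sum_x g x = 0.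
Proof.
move=> r_inj g_skew; apply/eqP; suff: (\sum_x g x) *+ 2 == 0 by rewrite mulrn_eq0.
rewrite mulr2n {1}(reindex_inj r_inj) -big_split big1 //= => x _.
by rewrite g_skew addNr.
Qed.

Section InvariantFunctions.
Variables (F : fieldType) (T : finType) (f : T -> T).
Hypothesis f_inj : injective f.

Let f_sym : connect_sym (frel f) := fconnect_sym f_inj.
Let orbit_rep := {x : T | froots f x}.
Let orbit_of (x : T) : orbit_rep := exist _ (froot f x) (roots_root f_sym x).

Let spread (c : {ffun orbit_rep -> F^o}) : {ffun T -> F^o} :=
  [ffun x => c (orbit_of x)].
Let spread_is_linear : linear spread.
Proof. by move=> a u v; apply/ffunP => x; rewrite !ffunE. Qed.
HB.instance Definition _ := GRing.isLinear.Build _ _ _ _ spread spread_is_linear.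

Lemma fcard_le_dim_invariant (W : {vspace {ffun T -> F^o}}) :
  (forall h : {ffun T -> F^o}, (forall x, h (f x) = h x) -> h \in W) ->
  (fcard f predT <= \dim W)%N.
Proof.
move=> invW.
have orbit_ofK (r : orbit_rep) : orbit_of (val r) = r.
  by apply: val_inj; case: r => x /= /eqP.
have spreadW : (limg (linfun spread) <= W)%VS.
  apply/subvP => _ /memv_imgP [c _ ->]; apply: invW => x.
  rewrite !lfunE /= !ffunE; congr (c _); apply: val_inj => /=.
  exact/esym/(fingraph.rootP f_sym)/fconnect1.
apply: leq_trans (dimvS spreadW); rewrite limg_dim_eq; last first.
  apply/eqP; rewrite -subv0; apply/subvP => c /memv_capP [_].
  rewrite memv_ker memv0 => /eqP c0; apply/eqP/ffunP => r.
  have := congr1 (fun h : {ffun T -> F^o} => h (val r)) c0.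
  by rewrite lfunE /= !ffunE orbit_ofK.
rewrite dim_ffun card_sig.
by apply/eq_leq/eq_card => x; rewrite !inE andbT.
Qed.
End InvariantFunctions.

Section DartGraph.
Variables (V D : finType) (tail : D -> V) (rev : D -> D).
Hypothesis revK : involutive rev.
Local Notation adj := (adj tail rev).

Lemma adjP u v : reflect (exists2 d, tail d = u & tail (rev d) = v) (adj u v).
Proof.
apply: (iffP existsP) => [[d /andP [/eqP <- /eqP <-]]|[d <- <-]]; first by exists d.
by exists d; rewrite !eqxx.
Qed.

Hypothesis conn : is_connected tail rev.

Lemma connected_ind (P : pred V) v0 :
  (forall d, P (tail d) -> P (tail (rev d))) -> P v0 -> forall v, P v.
Proof.
move=> Pstep Pv0 v.
have Pclosed : closed adj P.
  move=> u w /adjP [d <- <-]; apply/idP/idP; first exact: Pstep.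
  by rewrite -{2}[d]revK; apply: Pstep.
by rewrite -[P v]/(v \in P) -(closed_connect Pclosed (conn v0 v)).
Qed.
End DartGraph.

Section Sphere.
Variables (V D : finType) (tail : D -> V) (rev rot : D -> D).
Hypotheses (revK : involutive rev) (rev_neq : forall d, rev d != d)
  (rot_inj : injective rot) (tail_rot : forall d, tail (rot d) = tail d)
  (rot_trans : forall d e, tail d = tail e -> fconnect rot d e)
  (conn : is_connected tail rev) (sph : is_spherical V rev rot).
Local Notation fn := (face_next rev rot).

Let rev_inj : injective rev := can_inj revK.
Let fn_inj : injective fn.
Proof. by move=> a b /rot_inj /rev_inj. Qed.

Section Cohomology.
Variable F : numFieldType.
Local Notation Y := {ffun D -> F^o}.
Local Notation X := {ffun V -> F^o}.

Definition skew (h : Y) : Y := [ffun d => h d - h (rev d)].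
Definition face_sum (g : Y) : Y := [ffun x => \sum_(y | fconnect fn x y) g y].
Definition coboundary (p : X) : Y := [ffun d => p (tail (rev d)) - p (tail d)].
Definition face_indicator (a : D) : Y := [ffun x => (fconnect fn x a)%:R].

Let skew_is_linear : linear skew.
Proof. by move=> a u v; apply/ffunP => d; rewrite !ffunE scalerBr addrACA opprD. Qed.
HB.instance Definition _ := GRing.isLinear.Build _ _ _ _ skew skew_is_linear.
Let face_sum_is_linear : linear face_sum.
Proof.
move=> a u v; apply/ffunP => x; rewrite !ffunE scaler_sumr -big_split.
by apply: eq_bigr => y _; rewrite !ffunE.
Qed.
HB.instance Definition _ := GRing.isLinear.Build _ _ _ _ face_sum face_sum_is_linear.
Let coboundary_is_linear : linear coboundary.
Proof. by move=> a u v; apply/ffunP => d; rewrite !ffunE scalerBr addrACA opprD. Qed.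
HB.instance Definition _ :=
  GRing.isLinear.Build _ _ _ _ coboundary coboundary_is_linear.

Lemma fcard_rev : (fcard rev predT * 2 = #|D|)%N.
Proof.
apply: (fcard_order_set rev_inj) => [|x y _ //]; apply/subsetP => x _.
rewrite inE (@order_cycle _ rev [:: x; rev x]) ?mem_head //= ?revK ?eqxx //.
by rewrite inE andbT eq_sym rev_neq.
Qed.

Lemma fcard_rev_le_dim_ker_skew : (fcard rev predT <= \dim (lker (linfun skew)))%N.
Proof.
apply: (fcard_le_dim_invariant rev_inj) => h hrev; rewrite memv_ker lfunE /=.
by apply/eqP/ffunP => d; rewrite !ffunE hrev subrr.
Qed.

Lemma face_indicator_fn a : face_indicator (fn a) = face_indicator a.
Proof. by apply/ffunP => x; rewrite !ffunE -same_fconnect1_r. Qed.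

Lemma face_sum_skew_delta a :
  face_sum (skew [ffun y => (y == a)%:R]) = face_indicator a - face_indicator (rev a).
Proof.
have sum_delta (P : pred D) b : \sum_(y | P y) ((y == b)%:R : F^o) = (P b)%:R.
  rewrite big_mkcond (bigD1 b) //= eqxx big1 ?addr0; first by case: (P b).
  by move=> y /negbTE ->; case: (P y).
apply/ffunP => x; rewrite !ffunE.
under eq_bigr => y _ do rewrite !ffunE (canF_eq revK).
by rewrite sumrB !sum_delta.
Qed.

Definition circulations := (linfun face_sum @: limg (linfun skew))%VS.

Definition face_homologous a b := face_indicator a - face_indicator b \in circulations.

Lemma face_homologous_refl a : face_homologous a a.
Proof. by rewrite /face_homologous subrr mem0v. Qed.

Lemma face_homologous_sym a b : face_homologous a b -> face_homologous b a.
Proof. by rewrite /face_homologous -opprB memvN. Qed.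

Lemma face_homologous_trans a b c :
  face_homologous a b -> face_homologous b c -> face_homologous a c.
Proof. by move=> ab bc; have := memvD ab bc; rewrite addrA subrK. Qed.

Lemma face_homologous_rev a : face_homologous a (rev a).
Proof.
rewrite /face_homologous -face_sum_skew_delta -[skew _]lfunE -[face_sum _]lfunE.
by do 2!apply: memv_img; apply: memvf.
Qed.

Lemma face_homologous_rot a : face_homologous a (rot a).
Proof.
have -> : rot a = fn (rev a) by rewrite /face_next revK.
by rewrite /face_homologous face_indicator_fn; apply: face_homologous_rev.
Qed.

Lemma face_homologous_vertex a b : tail a = tail b -> face_homologous a b.
Proof.
move=> /rot_trans ab.
have closed_rot : closed (frel rot) [pred y | face_homologous a y].
  move=> y _ /eqP <-; rewrite !inE; apply/idP/idP => ay.
    exact: face_homologous_trans ay (face_homologous_rot y).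
  exact/(face_homologous_trans ay)/face_homologous_sym/face_homologous_rot.
by have := closed_connect closed_rot ab; rewrite !inE face_homologous_refl.
Qed.

Lemma face_homologous_all a b : face_homologous a b.
Proof.
pose at_vertex v := [forall y, (tail y == v) ==> face_homologous a y].
suff /forallP/(_ b) : at_vertex (tail b) by rewrite eqxx.
apply: (connected_ind revK conn (v0 := tail a)) => [d /forallP ad|].
  apply/forallP => y; apply/implyP => /eqP yd.
  have /implyP/(_ (eqxx _)) := ad d.
  move/face_homologous_trans/(_ (face_homologous_rev d))/face_homologous_trans.
  by apply; apply: face_homologous_vertex.
by apply/forallP => y; apply/implyP => /eqP ya; apply: face_homologous_vertex.
Qed.

Lemma fcard_face_le_dim_circulations (x0 : D) :
  (fcard fn predT <= \dim circulations + 1)%N.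
Proof.
apply: leq_trans (_ : \dim (circulations + <[face_indicator x0]>) <= _)%N; last first.
  by rewrite (leq_trans (dimv_add_leqif _ _).1) // leq_add2l dim_vline leq_b1.
apply: (fcard_le_dim_invariant fn_inj) => h hfn.
have fn_sym : connect_sym (frel fn) := fconnect_sym fn_inj.
have -> : h = \sum_(r | froots fn r) h r *: face_indicator r.
  apply/ffunP => x; rewrite sum_ffunE (bigD1 (froot fn x)) ?roots_root //= big1.
    rewrite !ffunE connect_root addr0 [_ *: _]mulr1.
    by apply: fconnect_invariant (connect_root _ x) => y; rewrite /invariant /= hfn eqxx.
  move=> r /andP [/eqP rr /negbTE rx]; rewrite !ffunE -rr -root_connect //.
  by rewrite (fingraph.root_root fn_sym) eq_sym rr rx [_ *: _]mulr0.
apply: memv_suml => r _; apply: memvZ.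
rewrite -(subrK (face_indicator x0) (face_indicator r)) memv_add ?memv_line //.
exact: face_homologous_all.
Qed.

Lemma dim_ker_coboundary_le1 (v0 : V) : (\dim (lker (linfun coboundary)) <= 1)%N.
Proof.
apply: leq_trans (dimvS (_ : _ <= <[[ffun=> 1] : X]>)%VS) _; last first.
  by rewrite dim_vline leq_b1.
apply/subvP => p; rewrite memv_ker lfunE /= => /eqP p_closed.
have p_const v : p v = p v0.
  apply/eqP; move: v; apply: (connected_ind revK conn (v0 := v0)) => // d /eqP <-.
  have /eqP := congr1 (fun g : Y => g d) p_closed.
  by rewrite !ffunE subr_eq0 eq_sym.
by apply/vlineP; exists (p v0); apply/ffunP => v; rewrite !ffunE p_const [_ *: _]mulr1.
Qed.

Lemma coboundary_sub_closed_skew :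
  (limg (linfun coboundary) <= limg (linfun skew) :&: lker (linfun face_sum))%VS.
Proof.
apply/subvP => _ /memv_imgP [p _ ->]; rewrite memv_cap memv_ker !lfunE /=.
apply/andP; split.
  have -> : coboundary p = linfun skew [ffun d => - p (tail d)].
    by apply/ffunP => d; rewrite lfunE !ffunE /= opprK addrC.
  exact/memv_img/memvf.
apply/eqP/ffunP => x; rewrite !ffunE.
under eq_bigr => y _ do rewrite ffunE -[tail (rev y)](tail_rot (rev y)).
rewrite sumrB [X in _ - X](reindex_inj fn_inj) /=.
by apply/eqP; rewrite subr_eq0; apply/eqP/eq_bigl => y; apply: same_fconnect1_r.
Qed.

Lemma dim_skew_le : (\dim (limg (linfun skew)) <= #|D| %/ 2)%N.
Proof.
have := limg_ker_dim (linfun skew) fullv; rewrite capfv dim_ffun.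
have := fcard_rev; have := fcard_rev_le_dim_ker_skew; lia.
Qed.

Lemma dim_coboundary_ge (v0 : V) : (#|V| <= \dim (limg (linfun coboundary)) + 1)%N.
Proof.
have := limg_ker_dim (linfun coboundary) fullv; rewrite capfv dim_ffun.
have := dim_ker_coboundary_le1 v0; lia.
Qed.

Lemma coboundary_exact (x0 : D) : (#|V| + nfaces rev rot = #|D| %/ 2 + 2)%N ->
  limg (linfun coboundary) = (limg (linfun skew) :&: lker (linfun face_sum))%VS.
Proof.
move=> euler; apply/eqP; rewrite eqEdim coboundary_sub_closed_skew /=.
have := limg_ker_dim (linfun face_sum) (limg (linfun skew)).
have := dim_skew_le; have := dim_coboundary_ge (tail x0).
have := fcard_face_le_dim_circulations x0; rewrite -/circulations.
move: euler; rewrite /nfaces; lia.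
Qed.

Theorem skew_face_closed_coboundary (g : D -> F) :
  (forall d, g (rev d) = - g d) -> (forall x, \sum_(y | fconnect fn x y) g y = 0) ->
  exists p : V -> F, forall d, g d = p (tail (rev d)) - p (tail d).
Proof.
move=> g_skew g_faces.
have [x0 _ | D0] := pickP (@predT D); last by exists (fun=> 0) => d; have := D0 d.
have gS : ([ffun d => g d] : Y) \in (limg (linfun skew) :&: lker (linfun face_sum))%VS.
  rewrite memv_cap memv_ker; apply/andP; split.
    apply/memv_imgP; exists [ffun d => g d / 2]; rewrite ?memvf // lfunE.
    by apply/ffunP => d; rewrite !ffunE g_skew mulNr opprK -splitr.
  by rewrite lfunE; apply/eqP/ffunP => x; rewrite !ffunE; under eq_bigr do rewrite ffunE.
move: gS; rewrite -(coboundary_exact x0); last by apply: sph; apply/card_gt0P; exists x0.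
case/memv_imgP => p _ gp; exists p => d.
by have := congr1 (fun h : Y => h d) gp; rewrite lfunE !ffunE.
Qed.
End Cohomology.

Lemma int_potential (g : D -> int) :
  (forall d, g (rev d) = - g d) -> (forall x, \sum_(y | fconnect fn x y) g y = 0) ->
  forall v0 z, exists p : V -> int,
    p v0 = z /\ forall d, g d = p (tail (rev d)) - p (tail d).
Proof.
move=> g_skew g_faces v0 z.
have [q gq] : exists q : V -> rat, forall d, (g d)%:~R = q (tail (rev d)) - q (tail d).
  apply: skew_face_closed_coboundary => // [d|x]; first by rewrite g_skew mulrNz.
  by rewrite -rmorph_sum /= g_faces.
have q_int v : q v - q v0 \is a Num.int.
  apply: (connected_ind revK conn (v0 := v0) (P := fun v => q v - q v0 \is a Num.int)).
    move=> d; rewrite -[q (tail (rev d))](subrK (q (tail d))) -gq -addrA.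
    by apply: rpredD; apply: intr_int.
  by rewrite subrr rpred0.
exists (fun v => z + numq (q v - q v0)); split=> [|d]; first by rewrite subrr addr0.
by apply: (@intr_inj rat); rewrite gq !rmorphB !rmorphD /= !numqK //; ring.
Qed.

Lemma patch_face_sums_eq0 (R : numDomainType) (g : D -> R) :
  (forall d1 d2, order fn d1 != 3 -> order fn d2 != 3 -> fconnect fn d1 d2) ->
  (forall d, g (rev d) = - g d) ->
  (forall x, order fn x = 3 -> g x + g (fn x) + g (fn (fn x)) = 0) ->
  forall x, \sum_(y | fconnect fn x y) g y = 0.
Proof.
move=> outer g_skew g_tri x; have [x3|xn3] := eqVneq (order fn x) 3.
  by rewrite triangle_face_sum ?g_tri.
pose S y := ~~ fconnect fn x y.
have S_fn (h : D -> R) : \sum_(y | S y) h (fn y) = \sum_(y | S y) h y.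
  by rewrite [RHS](reindex_inj fn_inj); apply: eq_bigl => y; rewrite /S -same_fconnect1_r.
(* the darts outside the face of [x] lie on triangles and form an [fn]-stable set *)
have S_eq0 : \sum_(y | S y) g y = 0.
  apply/eqP; suff: (\sum_(y | S y) g y) *+ 3 == 0 by rewrite mulrn_eq0.
  rewrite !mulrS mulr0n addr0 -{3}(S_fn g) -(S_fn (fun y => g (fn y))) -{2}(S_fn g).
  rewrite -!big_split big1 //= => y Sy; rewrite addrA g_tri //.
  by apply: contraNeq Sy => /(outer _ _ xn3).
by have := sum_skew_eq0 rev_inj g_skew; rewrite (bigID (fconnect fn x)) /= S_eq0 addr0.
Qed.

Lemma patch_potential (g : D -> int * int) :
  (forall d1 d2, order fn d1 != 3 -> order fn d2 != 3 -> fconnect fn d1 d2) ->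
  (forall d, g (rev d) = - g d) ->
  (forall x, order fn x = 3 -> g x + g (fn x) + g (fn (fn x)) = 0) ->
  forall v0 z, exists p : V -> int * int,
    p v0 = z /\ forall d, g d = p (tail (rev d)) - p (tail d).
Proof.
move=> outer g_skew g_tri v0 z.
have coord (pr : int * int -> int) :
    pr 0 = 0 -> {morph pr : a b / a + b} -> {morph pr : a / - a} ->
    exists q : V -> int, q v0 = pr z /\ forall d, pr (g d) = q (tail (rev d)) - q (tail d).
  move=> pr0 prD prN; apply: int_potential => [d|x]; first by rewrite g_skew prN.
  apply: patch_face_sums_eq0 outer _ _ x => [d|y y3]; first by rewrite g_skew prN.
  by rewrite -!prD g_tri.
have [p1 [p1v0 gp1]] := coord fst erefl (fun _ _ => erefl) (fun _ => erefl).
have [p2 [p2v0 gp2]] := coord snd erefl (fun _ _ => erefl) (fun _ => erefl).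
exists (fun v => (p1 v, p2 v)); split=> [|d]; first by rewrite p1v0 p2v0 -surjective_pairing.
by rewrite [g d]surjective_pairing gp1 gp2.
Qed.
End Sphere.

Section DappledGraph.
Variables (V D : finType) (tail : D -> V) (rev rot : D -> D).
Variables (hue : V -> 'Z_3) (color : V -> 'Z_2 * 'Z_2).
Hypotheses (revK : involutive rev) (rot_inj : injective rot)
  (tail_rot : forall d, tail (rot d) = tail d)
  (hue_proper : proper_coloring tail rev hue)
  (color_proper : proper_coloring tail rev color).
Local Notation fn := (face_next rev rot).

Definition dart_step d :=
  grid_step (hue (tail (rev d)) - hue (tail d)) (color (tail (rev d)) - color (tail d)).

Let adj_dart d : adj tail rev (tail d) (tail (rev d)).
Proof. by apply/adjP; exists d. Qed.

Let hue_neq d : hue (tail d) != hue (tail (rev d)).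
Proof. exact/eqP/hue_proper/adj_dart. Qed.

Let color_neq d : color (tail d) != color (tail (rev d)).
Proof. exact/eqP/color_proper/adj_dart. Qed.

Lemma dart_stepN d : dart_step (rev d) = - dart_step d.
Proof.
rewrite /dart_step revK -(opprB (hue _)) -(opprB (color _)).
by rewrite grid_stepN // subr_eq0 eq_sym.
Qed.

Lemma hueT_dart_step d : hueT (dart_step d) = hue (tail (rev d)) - hue (tail d).
Proof. by rewrite hueT_grid_step // subr_eq0 eq_sym. Qed.

Lemma colorT_dart_step d : colorT (dart_step d) = color (tail (rev d)) - color (tail d).
Proof. by rewrite colorT_grid_step // subr_eq0 eq_sym. Qed.

Lemma adjT_dart_step p d : adjT p (p + dart_step d).
Proof. by apply: adjT_grid_step; rewrite subr_eq0 eq_sym. Qed.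

Lemma dart_step_walk3 a b c :
  tail (rev a) = tail b -> tail (rev b) = tail c -> tail (rev c) = tail a ->
  dart_step a + dart_step b + dart_step c = 0.
Proof.
move=> ab bc ca.
move: (hue_neq a) (hue_neq b) (hue_neq c) (color_neq a) (color_neq b) (color_neq c).
rewrite /dart_step ab bc ca; exact: grid_step_triangle.
Qed.

Lemma dart_step_face3 x : order fn x = 3 ->
  dart_step x + dart_step (fn x) + dart_step (fn (fn x)) = 0.
Proof.
move=> x3; have fn_inj : injective fn by move=> a b /rot_inj /(can_inj revK).
have fn3 : fn (fn (fn x)) = x by have := iter_order fn_inj x; rewrite x3.
have tail_fn d : tail (fn d) = tail (rev d) by apply: tail_rot.
by apply: dart_step_walk3; rewrite -tail_fn ?fn3.
Qed.

Hypothesis conn : is_connected tail rev.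

Lemma dart_potential_hue_color (p : V -> int * int) v0 :
  (forall d, dart_step d = p (tail (rev d)) - p (tail d)) ->
  hueT (p v0) = hue v0 -> colorT (p v0) = color v0 ->
  forall v, hueT (p v) = hue v /\ colorT (p v) = color v.
Proof.
move=> p_step hue0 color0.
suff P_all v : (hueT (p v) == hue v) && (colorT (p v) == color v).
  by move=> v; case/andP: (P_all v) => /eqP -> /eqP ->.
move: v; apply: (connected_ind revK conn (v0 := v0)); last by rewrite hue0 color0 !eqxx.
move=> d /andP [/eqP hd /eqP cd].
have := hueT_dart_step d; have := colorT_dart_step d.
by rewrite p_step hueTB colorTB hd cd => /addIr -> /addIr ->; rewrite !eqxx.
Qed.
End DappledGraph.

Theorem theorem7 (V D : finType) (tail : D -> V) (rev rot : D -> D)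
    (hue : V -> 'Z_3) (color : V -> 'Z_2 * 'Z_2) :
  is_patch tail rev rot ->
  proper_coloring tail rev hue ->
  proper_coloring tail rev color ->
  exists f : V -> int * int,
    [/\ forall u v, adj tail rev u v -> adjT (f u) (f v),
        forall v, hue v = hueT (f v)
      & forall v, color v = colorT (f v)].
Proof.
move=> [[[revK rev_neq rot_inj tail_rot rot_trans] _ sph] conn outer] hue_proper color_proper.
have [v0 _ | V0] := pickP (@predT V); last first.
  by exists (fun=> 0); split=> [u v _|v|v]; have := V0 v.
have [z [hue_z color_z]] := exists_grid_point (hue v0) (color v0).
have [p [p_v0 p_step]] := patch_potential revK rev_neq rot_inj tail_rot rot_trans conn sph
  outer (dart_stepN revK hue_proper color_proper)
  (dart_step_face3 revK rot_inj tail_rot hue_proper color_proper) v0 z.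
have hue_color v : hueT (p v) = hue v /\ colorT (p v) = color v.
  by apply: (dart_potential_hue_color revK hue_proper color_proper conn (v0 := v0) p_step);
    rewrite p_v0.
exists p; split=> [u v /adjP [d <- <-]|v|v]; try by case: (hue_color v).
by rewrite -(subrK (p (tail d)) (p (tail (rev d)))) -p_step addrC; apply: adjT_dart_step.
Qed.
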